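(* For every fixed integer $k \ge 1$, \[ \sum_{n \ge 0} w(n,k) q^n = \frac{q^{k+4}}{(1-q)^2(1-q^2)^{k+1}}, \] where $w(n,k)$ is the number of compositions of $n$ with all parts in $\{1,2\}$ having exactly $k$ water cells.
   Context: A composition of $n \ge 0$ is a finite sequence $(c_1,\dots,c_t)$ of positive integers with $c_1+\cdots+c_t=n$; the empty composition is the unique composition of $0$. Let $C_{12}(n)$ be the set of compositions of $n$ all of whose parts lie in $\{1,2\}$. The number of water cells of a composition $(c_1,\dots,c_t)$ is $\sum_{i=1}^{t} \max\bigl(0, \min(\max_{j \le i} c_j, \max_{j \ge i} c_j) - c_i\bigr)$ (the number of unit squares that would hold water poured over its bargraph, in which column $i$ has height $c_i$). For $n,k \ge 0$, $W(n,k)$ is the set of compositions in $C_{12}(n)$ with exactly $k$ water cells and $w(n,k)=|W(n,k)|$. *)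

From mathcomp Require Import all_boot all_order all_algebra.
Set Implicit Arguments. Unset Strict Implicit. Unset Printing Implicit Defensive.
Import GRing.Theory.

(* Number of water cells of a composition c:
   sum_i max(0, min(max_{j<=i} c_j, max_{j>=i} c_j) - c_i);
   nat truncated subtraction implements max(0, .). *)
Definition water (c : seq nat) : nat :=
  \sum_(i < size c)
    (minn (\max_(j < i.+1) nth 0 c j) (\max_(i <= j < size c) nth 0 c j)
     - nth 0 c i).

(* A composition of length t is represented by a t-tuple over 'I_3 whose
   entries all lie in {1,2}; t ranges over 0..n (a composition of n has at
   most n parts). *)
Definition W_set (n k t : nat) : {set t.-tuple 'I_3} :=
  [set s : t.-tuple 'I_3 |
     [&& all (fun x : 'I_3 => (val x == 1) || (val x == 2)) s,
         sumn (map val s) == n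
       & water (map val s) == k]].

Definition w (n k : nat) : nat := \sum_(t < n.+1) #|W_set n k t|.

(* Equality of formal power series  sum_n a n q^n = P / Q  in Z[[q]]
   (Q with constant coefficient 1, hence invertible), i.e.
   (sum_n a n q^n) * Q = P coefficientwise; the n-th coefficient of the
   product only involves a 0, ..., a n. *)
Definition gf_eq (a : nat -> int) (P Q : {poly int}) : Prop :=
  forall n : nat, (((\poly_(m < n.+1) a m) * Q)`_n = P`_n)%R.

From mathcomp Require Import all_boot all_order all_algebra.
From mathcomp Require Import zify.
Import GRing.Theory.

Set Implicit Arguments.
Unset Strict Implicit.
Unset Printing Implicit Defensive.

(* A leading 1 holds no water and does not change the water of the rest.  On
   parts in {1,2} a leading 2 raises the left wall of every later column to 2,
   so [water (2 :: s)] is the number of 1s of [s] followed somewhere by a 2.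
   Splitting compositions by their first part, F n = w n k (k >= 1) and
   H j n = #{compositions of n that contain a 2 and have j such 1s} satisfy
     F (n+2) = F (n+1) + H k n,
     H j (n+2) = H (j-1) (n+1) + H j n + [j = 0],
   the last term coming from 2 :: 1^n.  As power series this reads
   (1-q) F = q^2 H k,  (1-q^2) H (j+1) = q H j,  (1-q) (1-q^2) H 0 = q^2. *)

Lemma nat_ind2 (P : nat -> Prop) :
  P 0 -> P 1 -> (forall n, P n -> P n.+1 -> P n.+2) -> forall n, P n.
Proof.
move=> P0 P1 PSS n; suff [] : P n /\ P n.+1 by [].
by elim: n => [|n [IHn IHSn]]; split => //; apply: PSS.
Qed.

Lemma size_le_sumn s : all (fun x => 0 < x) s -> size s <= sumn s.
Proof. by elim: s => //= x s IH /andP [x_pos /IH]; lia. Qed.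

Lemma count_split (T : Type) (a b : pred T) l :
  count a l = count (predI a b) l + count (predI a (predC b)) l.
Proof. by elim: l => //= x l ->; case: (a x); case: (b x) => /=; lia. Qed.

Lemma eq_count_uniq_on (T : eqType) (P : pred T) (s1 s2 : seq T) :
  uniq s1 -> uniq s2 -> {in P, s1 =i s2} -> count P s1 = count P s2.
Proof.
move=> s1_uniq s2_uniq s12; rewrite -!size_filter; apply: perm_size.
apply: uniq_perm; rewrite ?filter_uniq // => x; rewrite !mem_filter.
by case Px: (P x) => //=; apply: s12.
Qed.

Lemma sum_ord_eq (m N : nat) : \sum_(t < N) (m == t :> nat) = (m < N).
Proof.
elim: N => [|N IH]; first by rewrite big_ord0.
by rewrite big_ord_recr /= IH ltnS [in RHS]leq_eqVlt; case: ltngtP.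
Qed.

Lemma sum_count_size (T : Type) (P : pred (seq T)) N l :
  all (fun s => size s < N) l ->
  \sum_(t < N) count (fun s => P s && (size s == t)) l = count P l.
Proof.
elim: l => [|x l IH] /=; first by rewrite big1.
case/andP => x_lt l_lt; rewrite big_split /= IH //; congr (_ + _).
by case: (P x); rewrite /= ?sum_ord_eq ?x_lt ?big1.
Qed.

Definition suffix_max (c : seq nat) (i : nat) := \max_(i <= j < size c) nth 0 c j.

Lemma suffix_max_consS x s i : suffix_max (x :: s) i.+1 = suffix_max s i.
Proof. by rewrite /suffix_max big_add1. Qed.

Lemma suffix_max_cons0 x s : suffix_max (x :: s) 0 = maxn x (suffix_max s 0).
Proof. by rewrite /suffix_max big_ltn //= big_add1. Qed.

Lemma water_cons x s : water (x :: s) =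
  \sum_(i < size s)
    (minn (maxn x (\max_(j < i.+1) nth 0 s j)) (suffix_max s i) - nth 0 s i).
Proof.
rewrite /water /= big_ord_recl /= big_ord_recl big_ord0 maxn0.
rewrite -[\max_(0 <= j < _) _]/(suffix_max (x :: s) 0) suffix_max_cons0.
rewrite (minn_idPl (leq_maxl _ _)) subnn add0n; apply: eq_bigr => i _.
by rewrite big_ord_recl -[\max_(_.+1 <= j < _) _]/(suffix_max (x :: s) i.+1) suffix_max_consS.
Qed.

Lemma water_cons1 s : all (fun x => 0 < x) s -> water (1 :: s) = water s.
Proof.
move=> s_pos; rewrite water_cons; apply: eq_bigr => i _.
have si_pos : 0 < nth 0 s i by apply: (all_nthP 0 s_pos).
have si_le : nth 0 s i <= \max_(j < i.+1) nth 0 s j.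
  exact: (@leq_bigmax _ (fun j : 'I_i.+1 => nth 0 s j) ord_max).
by rewrite (maxn_idPr (leq_trans si_pos si_le)).
Qed.

Definition all12 (s : seq nat) := all (fun x => (x == 1) || (x == 2)) s.

Lemma all12_pos s : all12 s -> all (fun x => 0 < x) s.
Proof. by elim: s => //= x s IH /andP [/orP [] /eqP -> /IH ->]. Qed.

Fixpoint covered_ones (s : seq nat) : nat :=
  if s is y :: s' then ((y == 1) && (2 \in s')) + covered_ones s' else 0.

Lemma covered_ones_notin2 s : 2 \notin s -> covered_ones s = 0.
Proof.
elim: s => //= y s IH; rewrite in_cons negb_or => /andP [_ s_no2].
by rewrite (negbTE s_no2) andbF IH.
Qed.

Lemma suffix_max0_le2 s : all12 s -> suffix_max s 0 <= 2.
Proof.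
elim: s => [|y s IH] /=; first by rewrite /suffix_max big_geq.
case/andP => y12 s12; rewrite suffix_max_cons0 geq_max IH // andbT.
by case/orP: y12 => /eqP ->.
Qed.

Lemma suffix_max0_in2 s : all12 s -> 2 \in s -> suffix_max s 0 = 2.
Proof.
elim: s => [|y s IH] //= /andP [y12 s12]; rewrite suffix_max_cons0 in_cons.
case/orP => [/eqP <-|s2]; first exact/maxn_idPl/suffix_max0_le2.
by rewrite IH //; apply/maxn_idPr; case/orP: y12 => /eqP ->.
Qed.

Lemma suffix_max0_notin2 s : all12 s -> 2 \notin s -> suffix_max s 0 <= 1.
Proof.
elim: s => [|y s IH] /=; first by rewrite /suffix_max big_geq.
case/andP => y12 s12; rewrite suffix_max_cons0 in_cons negb_or => /andP [y_ne2 s_no2].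
by rewrite geq_max IH // andbT; case/orP: y12 y_ne2 => /eqP ->.
Qed.

Lemma sum_wall2_covered_ones s : all12 s ->
  \sum_(i < size s) (minn 2 (suffix_max s i) - nth 0 s i) = covered_ones s.
Proof.
elim: s => [|y s IH] /=; first by rewrite big_ord0.
case/andP => y12 s12; rewrite big_ord_recl /= -IH //.
congr (_ + _); last by apply: eq_bigr => i _; rewrite suffix_max_consS.
rewrite suffix_max_cons0; case/orP: y12 => /eqP -> /=.
  have [s2|s_no2] := boolP (2 \in s); first by rewrite suffix_max0_in2.
  by move: (@suffix_max0_notin2 s s12 s_no2); case: (suffix_max s 0) => [|[|]].
by rewrite (minn_idPl (leq_maxl _ _)).
Qed.

Lemma water_cons2 s : all12 s -> water (2 :: s) = covered_ones s.
Proof.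
move=> s12; rewrite water_cons -sum_wall2_covered_ones //; apply: eq_bigr => i _.
congr (minn _ _ - _); apply/maxn_idPl/bigmax_leqP => j _.
have [j_lt|j_ge] := ltnP j (size s); last by rewrite nth_default.
by have /orP [/eqP ->|/eqP ->] := all_nthP 0 s12 j j_lt.
Qed.

Fixpoint comps (n : nat) : seq (seq nat) :=
  match n with
  | 0 => [:: [::]]
  | 1 => [:: [:: 1]]
  | (m.+1 as n').+1 => map (cons 1) (comps n') ++ map (cons 2) (comps m)
  end.

Lemma compsSS n :
  comps n.+2 = map (cons 1) (comps n.+1) ++ map (cons 2) (comps n).
Proof. by []. Qed.

Lemma mem_comps n s : (s \in comps n) = all12 s && (sumn s == n).
Proof.
apply/idP/idP.
  elim/nat_ind2: n s => [s|s|n IHn IHSn s]; try by rewrite inE => /eqP ->.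
  rewrite compsSS mem_cat => /orP [] /mapP [s' s'_in ->].
    by case/andP: (IHSn _ s'_in) => s'12 /eqP sum_s'; rewrite /= s'12 sum_s' add1n eqxx.
  by case/andP: (IHn _ s'_in) => s'12 /eqP sum_s'; rewrite /= s'12 sum_s' add2n eqxx.
case/andP => + /eqP <-; elim: s => [|x s IH] // /andP [/orP [] /eqP -> s12].
  rewrite [sumn _]/= add1n; case E: (sumn s) => [|m].
    by move: (IH s12); rewrite E inE => /eqP ->.
  by rewrite compsSS mem_cat map_f // -E IH.
by rewrite [sumn _]/= add2n compsSS mem_cat map_f ?orbT // IH.
Qed.

Lemma comps_uniq n : uniq (comps n).
Proof.
elim/nat_ind2: n => // n IHn IHSn.
have cons_inj x : injective (cons x : seq nat -> seq nat) by move=> ? ? [].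
rewrite compsSS cat_uniq !map_inj_uniq ?IHn ?IHSn //= andbT.
by apply/hasP => -[_ /mapP [? _ ->] /mapP [] ].
Qed.

Lemma count_comps_notin2 n : count (fun s => 2 \notin s) (comps n) = 1.
Proof.
elim/nat_ind2: n => // n _ IHSn.
rewrite compsSS count_cat !count_map.
rewrite (eq_count (a2 := fun s => 2 \notin s)); last by move=> s /=; rewrite in_cons.
by rewrite IHSn (eq_count (a2 := pred0)) ?count_pred0.
Qed.

Lemma card_W_set n k t :
  #|W_set n k t| = count (fun s => (water s == k) && (size s == t)) (comps n).
Proof.
rewrite cardsE cardE /enum_mem size_filter.
pose f (x : t.-tuple 'I_3) := map val (val x).
pose R s := [&& all12 s, sumn s == n, water s == k & size s == t].
transitivity (count R (map f (enum {: t.-tuple 'I_3}))).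
  rewrite -enumT count_map; apply: eq_count => x /=.
  by rewrite /R /f size_map size_tuple eqxx andbT /all12 all_map.
transitivity (count R (comps n)); last first.
  by apply: eq_in_count => s; rewrite mem_comps /R => /andP [-> ->].
apply: eq_count_uniq_on; rewrite ?comps_uniq //.
  by rewrite map_inj_uniq ?enum_uniq // => x y /(inj_map val_inj)/val_inj.
move=> s /and4P [s12 sum_s _ /eqP size_s]; rewrite mem_comps s12 sum_s.
have size_inord : size (map (@inord 2) s) == t by rewrite size_map size_s.
apply/mapP; exists (Tuple size_inord); first by rewrite mem_enum.
rewrite /f /= -map_comp map_id_in // => x x_in /=.
by rewrite inordK //; case/orP: (allP s12 x x_in) => /eqP ->.
Qed.

Lemma w_count k n : w n k = count (fun s => water s == k) (comps n).
Proof.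
rewrite /w; under eq_bigr => t _ do rewrite card_W_set.
apply: sum_count_size; apply/allP => s; rewrite mem_comps => /andP [s12 /eqP <-].
by rewrite ltnS size_le_sumn // all12_pos.
Qed.

Definition covered_count (j n : nat) : nat :=
  count (fun s => (2 \in s) && (covered_ones s == j)) (comps n).

Lemma wSS k n : 0 < k ->
  w n.+2 k = w n.+1 k + covered_count k n.
Proof.
move=> k_pos; rewrite !w_count compsSS count_cat !count_map.
congr (_ + _); apply: eq_in_count => s; rewrite mem_comps => /andP [s12 _] /=.
  by rewrite water_cons1 // all12_pos.
rewrite water_cons2 //; have [cov_k|] := eqP; rewrite ?andbF // andbT.
by apply/esym; apply: contraTT k_pos; rewrite -cov_k => /covered_ones_notin2 ->.
Qed.

Lemma covered_countSS j n : covered_count j n.+2 =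
  (if j is j'.+1 then covered_count j' n.+1 else 0) + covered_count j n + (j == 0).
Proof.
rewrite /covered_count compsSS count_cat !count_map -addnA; congr (_ + _).
  case: j => [|j]; last by apply: eq_count => s /=; rewrite in_cons; case: (2 \in s).
  rewrite (eq_count (a2 := pred0)) ?count_pred0 // => s /=.
  by rewrite in_cons; case: (2 \in s).
rewrite (eq_count (a2 := fun s => covered_ones s == j)); last first.
  by move=> s /=; rewrite ?in_cons ?eqxx.
rewrite (@count_split _ (fun s => covered_ones s == j) (fun s => 2 \in s)); congr (_ + _).
  by apply: eq_count => s; rewrite /= andbC.
rewrite (eq_in_count (a2 := fun s : seq nat => (j == 0) && (2 \notin s))).
  by case: (j == 0); rewrite ?count_comps_notin2 ?count_pred0.
move=> s _ /=; case s2: (2 \in s); rewrite ?andbF //.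
by rewrite covered_ones_notin2 ?s2 // eq_sym.
Qed.

Section PowerSeries.
Local Open Scope ring_scope.
Variable R : comNzRingType.
Implicit Types (a b : nat -> R) (P Q : {poly R}).

Definition series_mul a Q (n : nat) : R := \sum_(i < n.+1) a i * Q`_(n - i).

Definition series_shift (m : nat) a (n : nat) : R :=
  if (m <= n)%N then a (n - m)%N else 0.

Definition series_delta (n : nat) : R := (n == 0)%:R.

Lemma series_mulE a Q n N : (n < N)%N ->
  series_mul a Q n = (\poly_(m < N) a m * Q)`_n.
Proof.
move=> n_lt; rewrite coefM; apply: eq_bigr => i _.
by rewrite coef_poly (leq_ltn_trans _ n_lt) // -ltnS.
Qed.

Lemma eq_series_mul a b Q : a =1 b -> series_mul a Q =1 series_mul b Q.
Proof. by move=> eq_ab n; apply: eq_bigr => i _; rewrite eq_ab. Qed.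

Lemma eq_series_shift m a b : a =1 b -> series_shift m a =1 series_shift m b.
Proof. by move=> eq_ab n; rewrite /series_shift eq_ab. Qed.

Lemma coefM_eql P P' Q n : (forall j, (j <= n)%N -> P`_j = P'`_j) ->
  (P * Q)`_n = (P' * Q)`_n.
Proof.
by move=> eqP'; rewrite !coefM; apply: eq_bigr => i _; rewrite eqP' // -ltnS.
Qed.

Lemma series_mulA a P Q : series_mul (series_mul a P) Q =1 series_mul a (P * Q).
Proof.
move=> n; rewrite !(series_mulE _ _ (ltnSn n)) mulrA.
apply: coefM_eql => j j_le; rewrite coef_poly ltnS j_le.
by rewrite (series_mulE _ _ (leq_ltn_trans j_le (ltnSn n))).
Qed.

Lemma series_mul_shift m a Q :
  series_mul (series_shift m a) Q =1 series_shift m (series_mul a Q).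
Proof.
move=> n; rewrite (series_mulE _ _ (ltnSn n)).
rewrite (@coefM_eql _ ('X^m * \poly_(i < n.+1) a i)); last first.
  move=> j j_le; rewrite coefXnM !coef_poly /series_shift ltnS j_le leqNgt.
  by case: ltnP => //= m_le; rewrite ltnS (leq_trans (leq_subr _ _) j_le).
rewrite -mulrA coefXnM /series_shift; case: ltnP => // m_le.
by rewrite -series_mulE // ltnS leq_subr.
Qed.

Lemma series_mul_1subXn a m :
  series_mul a (1 - 'X^m) =1 (fun n => a n - series_shift m a n).
Proof.
move=> n; rewrite (series_mulE _ _ (ltnSn n)) mulrBr mulr1 coefB coef_poly ltnSn.
rewrite mulrC coefXnM /series_shift; case: ltnP => // m_le.
by rewrite coef_poly ltnS leq_subr.
Qed.

Lemma series_shiftD m1 m2 a :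
  series_shift m1 (series_shift m2 a) =1 series_shift (m1 + m2) a.
Proof.
move=> n; rewrite /series_shift subnDA.
by case: (leqP m1 n); case: (leqP m2 (n - m1)); case: (leqP (m1 + m2) n) => //; lia.
Qed.

Lemma series_shift_delta m : series_shift m series_delta =1 (fun n => ('X^m)`_n).
Proof.
move=> n; rewrite coefXn /series_shift /series_delta subn_eq0.
by case: (ltngtP n m).
Qed.

Lemma series_mul_const1 : series_mul (fun=> 1) (1 - 'X) =1 series_delta.
Proof.
move=> n; rewrite -['X]expr1 series_mul_1subXn /series_shift /series_delta.
by case: n => [|n] /=; rewrite ?subr0 ?subrr.
Qed.

End PowerSeries.

Arguments series_delta {R} n.

Local Open Scope ring_scope.

Lemma w_series k : (0 < k)%N ->
  series_mul (fun n => (w n k)%:Z) (1 - 'X) =1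
  series_shift 2 (fun n => (covered_count k n)%:Z).
Proof.
move=> k_pos n; rewrite -['X]expr1 series_mul_1subXn /series_shift.
have water_nil : water [::] = 0%N by rewrite /water big_ord0.
case: n => [|[|n]]; last first.
  by rewrite /= wSS // PoszD addrAC subrr add0r subn2.
all: by rewrite !w_count /= ?water_cons1 // water_nil; case: k k_pos.
Qed.

Lemma covered_series_succ j :
  series_mul (fun n => (covered_count j.+1 n)%:Z) (1 - 'X^2) =1
  series_shift 1 (fun n => (covered_count j n)%:Z).
Proof.
move=> n; rewrite series_mul_1subXn /series_shift.
case: n => [|[|n]] //=.
by rewrite covered_countSS addn0 subn2 subn1 PoszD addrK.
Qed.

Lemma covered_series0 :
  series_mul (fun n => (covered_count 0 n)%:Z) (1 - 'X^2) =1
  series_shift 2 (fun=> 1).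
Proof.
move=> n; rewrite series_mul_1subXn /series_shift.
case: n => [|[|n]] //=.
by rewrite covered_countSS add0n subn2 PoszD addrAC subrr add0r.
Qed.

Lemma covered_series j :
  series_mul (fun n => (covered_count j n)%:Z) ((1 - 'X) * (1 - 'X^2) ^+ j.+1) =1
  series_shift (j + 2) series_delta.
Proof.
elim: j => [|j IHj] n.
  rewrite expr1 mulrC -series_mulA (eq_series_mul _ covered_series0).
  by rewrite series_mul_shift (eq_series_shift _ (@series_mul_const1 _)).
rewrite exprS mulrCA -series_mulA (eq_series_mul _ (@covered_series_succ j)).
by rewrite series_mul_shift (eq_series_shift _ IHj) series_shiftD add1n addSn.
Qed.

Theorem theorem2p2 (k : nat) : (1 <= k)%N ->
  gf_eq (fun n => (w n k)%:Z) ('X^(k + 4))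
        ((1 - 'X) ^+ 2 * (1 - 'X ^+ 2) ^+ k.+1).
Proof.
move=> k_pos n; rewrite -series_mulE // expr2 -mulrA -series_mulA.
rewrite (eq_series_mul _ (w_series k_pos)) series_mul_shift.
by rewrite (eq_series_shift _ (@covered_series k)) series_shiftD series_shift_delta addnCA.
Qed.
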